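(* Let $S,T\subseteq\mathbb{Z}_{>0}$ be finite and $x\in T\setminus(T\triangleleft S)$. Then $(T\setminus\{x\})\triangleleft S=T\triangleleft S$.
   Context: For finite $S,T\subseteq\mathbb{Z}_{>0}$, $T\triangleleft S$ is computed by going through the elements of $S$ from largest to smallest; each $s$ picks the largest element of $T$ that is less than $s$ and not yet picked (if one exists); $T\triangleleft S$ is the set of picked elements. *)

From mathcomp Require Import all_boot.
From mathcomp Require Import finmap.
Set Implicit Arguments. Unset Strict Implicit. Unset Printing Implicit Defensive.
Local Open Scope fset_scope.

(* One step of the matching: element [s] of S picks the largest element of T
   that is < s and not yet picked (if any); [P] is the set picked so far. *)
Definition pick_step (T : {fset nat}) (P : {fset nat}) (s : nat) : {fset nat} :=
  let C := [fset t in T | (t < s) && (t \notin P)] in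
  if C == fset0 then P else \max_(t <- C) t |` P.

(* T <| S : go through S from largest to smallest. *)
Definition tri (T S : {fset nat}) : {fset nat} :=
  foldl (pick_step T) fset0 (sort geq (enum_fset S)).

Definition pos_fset (A : {fset nat}) : bool := all (fun a => 0 < a) (enum_fset A).

From mathcomp Require Import all_boot.
From mathcomp Require Import finmap.
Local Open Scope fset_scope.

(* At every step of the matching, the candidates offered by [T `\ x] are those
   offered by [T] minus [x]. Removing a candidate that is not the largest one
   does not change the pick, and [x] is never the pick: the picked sets only
   grow along the fold, and [x] is absent from the final one. *)

Lemma bigmax_seq_in (r : seq nat) x : x \in r -> \max_(t <- r) t \in r.
Proof.
elim: r x => // a r IH x _; rewrite big_cons inE.
case: r IH => [|b r] IH; first by rewrite big_nil maxn0 eqxx.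
by rewrite /maxn; case: ifP => _; rewrite ?eqxx ?(IH b (mem_head b r)) ?orbT.
Qed.

Lemma bigmax_fsetD1 (C : {fset nat}) x :
  x != \max_(t <- C) t -> \max_(t <- C `\ x) t = \max_(t <- C) t.
Proof.
have [xC x_neq_max|xC _] := boolP (x \in C); last by rewrite mem_fsetD1.
apply/eqP; rewrite eqn_leq; apply/andP; split.
  apply/bigmax_leqP_seq => t; rewrite in_fsetD1 => /andP[_ tC] _.
  exact: leq_bigmax_seq.
by apply: leq_bigmax_seq; rewrite // in_fsetD1 eq_sym x_neq_max (bigmax_seq_in _ _ xC).
Qed.

Lemma pick_step_sub T P s : P `<=` pick_step T P s.
Proof. by rewrite /pick_step; case: ifP => _; rewrite ?fsubsetU1. Qed.

Lemma foldl_pick_step_sub T P l : P `<=` foldl (pick_step T) P l.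
Proof.
elim: l P => [|s l IH] P /=; first exact: fsubset_refl.
exact: fsubset_trans (pick_step_sub T P s) (IH _).
Qed.

Lemma pick_step_fsetD1 T P s x : x \notin pick_step T P s ->
  pick_step (T `\ x) P s = pick_step T P s.
Proof.
rewrite /pick_step; set C := [fset t in T | _].
have -> : [fset t in T `\ x | (t < s) && (t \notin P)] = C `\ x.
  by apply/fsetP => t; rewrite !inE -andbA.
have [xC|xC] := boolP (x \in C); last by rewrite mem_fsetD1.
have C_neq0 : C != fset0 by apply/fset0Pn; exists x.
rewrite (negbTE C_neq0) in_fset1U negb_or => /andP[x_neq_max _].
have maxC' : \max_(t <- C) t \in C `\ x.
  by rewrite in_fsetD1 eq_sym x_neq_max (bigmax_seq_in _ _ xC).
have C'_neq0 : C `\ x != fset0 by apply/fset0Pn; exists (\max_(t <- C) t).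
by rewrite (negbTE C'_neq0) bigmax_fsetD1.
Qed.

Lemma foldl_pick_step_fsetD1 T x P l : x \notin foldl (pick_step T) P l ->
  foldl (pick_step (T `\ x)) P l = foldl (pick_step T) P l.
Proof.
elim: l P => [|s l IH] P //= x_notin.
have x_notin_step : x \notin pick_step T P s.
  by apply: contra x_notin; apply: (fsubsetP (foldl_pick_step_sub T _ l)).
by rewrite pick_step_fsetD1 // IH.
Qed.

Theorem lemma4p3 (S T : {fset nat}) (x : nat) :
  pos_fset S -> pos_fset T ->
  x \in T -> x \notin tri T S ->
  tri (T `\ x) S = tri T S.
Proof.
by move=> _ _ _; apply: foldl_pick_step_fsetD1.
Qed.
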